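(* (1) Let $(\mathcal A_n,\varphi_n)_{n\in\mathbb N_0}$ with coface operators $\delta^k\colon(\mathcal A_{n-1},\varphi_{n-1})\to(\mathcal A_n,\varphi_n)$ ($k=0,\dots,n$) be an SCO in the category of noncommutative probability spaces. Let $(\mathcal A_\infty,\varphi_\infty)$ be the inductive limit of the filtration $\mathcal A_0\xrightarrow{\delta^1}\mathcal A_1\xrightarrow{\delta^2}\mathcal A_2\to\cdots$ with canonical morphisms $\mu_n\colon\mathcal A_n\to\mathcal A_\infty$, and let $\alpha_0\colon\mathcal A_\infty\to\mathcal A_\infty$ be the unique morphism with $\alpha_0\mu_{n-1}=\mu_n\delta^0$ for all $n\in\mathbb N$. Put $\iota_0:=\mu_0\colon\mathcal A_0\to\mathcal A_\infty$ and $\iota_N:=(\alpha_0)^N\iota_0$ for $N\in\mathbb N_0$. Then $(\iota_N)_{N\in\mathbb N_0}$ is spreadable (with respect to $\varphi_\infty$). (2) Let $\mathcal B$ be a unital algebra, $(\mathcal A,\varphi)$ a noncommutative probability space and $\iota_N\colon\mathcal B\to\mathcal A$ ($N\in\mathbb N_0$) unital homomorphisms; let $\mathcal A^f=*_{N=0}^\infty\mathcal B$ with canonical embeddings $\lambda_N$, $\pi\colon\mathcal A^f\to\mathcal A$ the unital homomorphism with $\pi\lambda_N=\iota_N$, and $\varphi^f:=\varphi\circ\pi$. Consider: (a) $(\iota_N)_{N\in\mathbb N_0}$ is spreadable. (b) Let $\mathcal A^f_n$ be the unital subalgebra generated by $\lambda_0(\mathcal B),\dots,\lambda_n(\mathcal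 B)$ and $\varphi^f_n$ the restriction of $\varphi^f$ to it. For $n\in\mathbb N$, $0\le k\le n$, the unital homomorphisms $\delta^k\colon\mathcal A^f_{n-1}\to\mathcal A^f_n$ determined by $\delta^k(\lambda_N(b))=\lambda_N(b)$ if $N<k$ and $\delta^k(\lambda_N(b))=\lambda_{N+1}(b)$ if $N\ge k$ ($b\in\mathcal B$, $0\le N\le n-1$) satisfy $\varphi^f_n\circ\delta^k=\varphi^f_{n-1}$, so that $(\mathcal A^f_n,\varphi^f_n)_{n\in\mathbb N_0}$ with these coface operators is an SCO in the category of noncommutative probability spaces. (c) Let $\mathcal A_n$ be the unital subalgebra of $\mathcal A$ generated by $\iota_0(\mathcal B),\dots,\iota_n(\mathcal B)$ and $\varphi_n$ the restriction of $\varphi$ to it. For all $n\in\mathbb N$, $0\le k\le n$ there exist unital homomorphisms $\delta^k\colon\mathcal A_{n-1}\to\mathcal A_n$ with $\delta^k(\iota_N(b))=\iota_N(b)$ if $N<k$ and $\delta^k(\iota_N(b))=\iota_{N+1}(b)$ if $N\ge k$ ($b\in\mathcal B$), satisfying $\varphi_n\circ\delta^k=\varphi_{n-1}$, such that $(\mathcal A_n,\varphi_n)_{n\in\mathbb N_0}$ with these coface operators is an SCO in the category of noncommutative probability spaces. Then (a) $\Leftrightarrow$ (b), and (c) $\Rightarrow$ (a).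
   Context: The category of noncommutative probability spaces has objects $(\mathcal A,\varphi)$ with $\mathcal A$ a unital associative complex algebra and $\varphi\colon\mathcal A\to\mathbb C$ linear with $\varphi(1)=1$; morphisms $\alpha\colon(\mathcal A,\varphi)\to(\mathcal B,\psi)$ are unital algebra homomorphisms with $\psi\circ\alpha=\varphi$. Inductive limits exist in this category (algebraic direct limit with the induced functional). An SCO in a category is a sequence of objects $F^n$ ($n\in\mathbb N_0$) with morphisms $\delta^k\colon F^{n-1}\to F^n$ ($k=0,\dots,n$) satisfying $\delta^j\delta^i=\delta^i\delta^{j-1}$ for $i<j$. For a sequence of unital homomorphisms $\iota_N\colon\mathcal B\to(\mathcal A,\varphi)$, its distribution is $\varphi^f=\varphi\circ\pi$ on the unital free product $\mathcal A^f=*_{N\ge0}\mathcal B$, where $\pi$ is the unique unital homomorphism with $\pi\circ\lambda_N=\iota_N$; equivalently, the collection of all moments $\varphi(\iota_{N_1}(b_1)\cdots\iota_{N_r}(b_r))$. The sequence is spreadable if for every strictly increasing $i\colon\mathbb N_0\to\mathbb N_0$ the sequence $(\iota_{i(N)})_N$ has the same distribution as $(\iota_N)_N$, i.e. $\varphi(\iota_{N_1}(b_1)\cdots\iota_{N_r}(b_r))=\varphi(\iota_{i(N_1)}(b_1)\cdots\iota_{i(N_r)}(b_r))$ for all $r$, all $N_j\in\mathbb N_0$ (repetitions allowed) and all $b_j\in\mathcal B$. *)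

From HB Require Import structures.
From mathcomp Require Import all_boot all_order all_algebra.
Set Implicit Arguments. Unset Strict Implicit. Unset Printing Implicit Defensive.
Import GRing.Theory Num.Theory.
Local Open Scope ring_scope.

Section NCP.
Variable C : numClosedFieldType.

Definition is_hom (A B : algType C) (f : A -> B) : Prop :=
  (forall (a : C) (x y : A), f (a *: x + y) = a *: f x + f y) /\
  f 1 = 1 /\ (forall x y : A, f (x * y) = f x * f y).

Definition is_hom_on (A B : algType C) (S : A -> Prop) (f : A -> B) : Prop :=
  (forall (a : C) (x y : A), S x -> S y -> f (a *: x + y) = a *: f x + f y) /\
  f 1 = 1 /\ (forall x y : A, S x -> S y -> f (x * y) = f x * f y).

Definition is_state (A : algType C) (phi : A -> C) : Prop :=
  (forall (a : C) (x y : A), phi (a *: x + y) = a * phi x + phi y) /\ phi 1 = 1.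

Definition is_morph (A B : algType C) (phiA : A -> C) (phiB : B -> C) (f : A -> B) : Prop :=
  is_hom f /\ (forall x, phiB (f x) = phiA x).

(* SCO: A n with functionals phi n; d n k : A n -> A n.+1 is the coface delta^k
   (meaningful for k <= n.+1). *)
Definition is_SCO (A : nat -> algType C) (phi : forall n, A n -> C)
    (d : forall n, nat -> A n -> A n.+1) : Prop :=
  (forall n, is_state (phi n)) /\
  (forall n k, (k <= n.+1)%N -> is_morph (phi n) (phi n.+1) (d n k)) /\
  (forall n i j (x : A n), (i < j)%N -> (j <= n.+2)%N ->
      d n.+1 j (d n i x) = d n.+1 i (d n j.-1 x)).

Definition is_ind_limit (A : nat -> algType C) (f : forall n, A n -> A n.+1)
    (L : algType C) (mu : forall n, A n -> L) : Prop :=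
  (forall n, is_hom (mu n)) /\ (forall n x, mu n.+1 (f n x) = mu n x) /\
  forall (D : algType C) (g : forall n, A n -> D),
    (forall n, is_hom (g n)) -> (forall n x, g n.+1 (f n x) = g n x) ->
    exists h : L -> D, (is_hom h /\ forall n x, h (mu n x) = g n x) /\
      forall h' : L -> D, is_hom h' -> (forall n x, h' (mu n x) = g n x) ->
        forall y, h' y = h y.

Definition is_free_product (B Af : algType C) (lam : nat -> B -> Af) : Prop :=
  (forall N, is_hom (lam N)) /\
  forall (D : algType C) (g : nat -> B -> D), (forall N, is_hom (g N)) ->
    exists h : Af -> D, (is_hom h /\ forall N b, h (lam N b) = g N b) /\
      forall h' : Af -> D, is_hom h' -> (forall N b, h' (lam N b) = g N b) ->
        forall y, h' y = h y.

Definition spreadable (B : Type) (A : algType C) (phi : A -> C)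
    (iota : nat -> B -> A) : Prop :=
  forall i : nat -> nat, (forall m n, (m < n)%N -> (i m < i n)%N) ->
  forall s : seq (nat * B),
    phi (\prod_(p <- s) iota p.1 p.2) = phi (\prod_(p <- s) iota (i p.1) p.2).

End NCP.

Inductive in_gen (C : numClosedFieldType) (A : algType C) (G : A -> Prop) : A -> Prop :=
  | gen_base x : G x -> in_gen G x
  | gen_one : in_gen G 1
  | gen_lin (a : C) x y : in_gen G x -> in_gen G y -> in_gen G (a *: x + y)
  | gen_mul x y : in_gen G x -> in_gen G y -> in_gen G (x * y).

Definition subalg_gen (C : numClosedFieldType) (B : Type) (A : algType C)
    (iota : nat -> B -> A) (n : nat) : A -> Prop :=
  in_gen (fun x => exists N b, (N <= n)%N /\ x = iota N b).

(* index shift of the coface delta^k *)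
Definition cshift (k N : nat) : nat := if (N < k)%N then N else N.+1.

(* condition (b) (indices shifted: n here is the paper's n-1) *)
Definition condB (C : numClosedFieldType) (B Af : algType C)
    (lam : nat -> B -> Af) (phif : Af -> C) : Prop :=
  forall n k, (k <= n.+1)%N ->
  forall delta : Af -> Af, is_hom_on (subalg_gen lam n) delta ->
    (forall N b, (N <= n)%N -> delta (lam N b) = lam (cshift k N) b) ->
    forall x, subalg_gen lam n x -> phif (delta x) = phif x.

Definition condC (C : numClosedFieldType) (B A : algType C)
    (phi : A -> C) (iota : nat -> B -> A) : Prop :=
  exists d : nat -> nat -> A -> A,
    (forall n k, (k <= n.+1)%N ->
       is_hom_on (subalg_gen iota n) (d n k) /\
       (forall x, subalg_gen iota n x -> subalg_gen iota n.+1 (d n k x)) /\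
       (forall N b, (N <= n)%N -> d n k (iota N b) = iota (cshift k N) b) /\
       (forall x, subalg_gen iota n x -> phi (d n k x) = phi x)) /\
    (forall n i j x, (i < j)%N -> (j <= n.+2)%N -> subalg_gen iota n x ->
       d n.+1 j (d n i x) = d n.+1 i (d n j.-1 x)).

From HB Require Import structures.
From mathcomp Require Import all_boot all_order all_algebra.
From mathcomp Require Import zify.

Import GRing.Theory Num.Theory.
Local Open Scope ring_scope.

(* Every strictly increasing map of an initial segment [0, n] of N is a
   composite of index shifts [cshift k], the index maps of the cofaces.  Hence
   spreadability is equivalent to the invariance of all moments under every
   single [cshift k].  In each situation of the theorem that invariance is
   produced by a state-preserving homomorphism acting on monomials as
   [cshift k]: the coface [d n k] of the SCO, transported to the inductive
   limit (part (1)); the given cofaces (condition (c)); or the endomorphism of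
   the free product induced by [cshift k] (condition (b)).  Conversely, for
   (a) => (b), two linear functionals on a generated subalgebra agree as soon
   as they agree on monomials. *)

Lemma eq_big_all (R : Type) (idx : R) (op : R -> R -> R) (I : Type) (P : pred I)
    (s : seq I) (F1 F2 : I -> R) :
  all P s -> (forall i, P i -> F1 i = F2 i) ->
  \big[op/idx]_(i <- s) F1 i = \big[op/idx]_(i <- s) F2 i.
Proof.
move=> hs eqF; elim: s hs => [|a s IH] /=; first by rewrite !big_nil.
by case/andP=> ha hs; rewrite !big_cons eqF ?IH.
Qed.
Arguments eq_big_all {R idx op I P s F1 F2}.

Definition increasing_upto (n : nat) (i : nat -> nat) : Prop :=
  forall a b, (a < b <= n)%N -> (i a < i b)%N.

Lemma increasing_upto_gap {n i a b} : increasing_upto n i ->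
  (a <= b)%N -> (b <= n)%N -> (i a + (b - a) <= i b)%N.
Proof.
move=> Hi; elim: b => [|b IH] hab hbn; first by move: hab; rewrite leqn0 => /eqP->; lia.
have [hlt | hge] := ltnP a b.+1.
  have := IH (ltnSE hlt) (ltnW hbn); have := Hi b b.+1; rewrite ltnSn hbn; lia.
have -> : a = b.+1 by lia.
by rewrite subnn addn0.
Qed.

Lemma increasing_upto_id {n i} : increasing_upto n i -> (i n <= n)%N ->
  forall N, (N <= n)%N -> i N = N.
Proof.
move=> Hi hn N hN.
have := increasing_upto_gap Hi (leq0n N) hN; have := increasing_upto_gap Hi hN (leqnn n).
lia.
Qed.

Lemma cshift_increasing k {m n} : (m < n)%N -> (cshift k m < cshift k n)%N.
Proof. by rewrite /cshift; case: ifP; case: ifP; lia. Qed.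

(* [k] is the first point moved by [i]; then [i = cshift k \o i'] on [0, n],
   and [i'] moves [n] one step less. *)
Lemma increasing_upto_cshift_factor {n i} : increasing_upto n i -> (n < i n)%N ->
  exists k (i' : nat -> nat), [/\ increasing_upto n i', i' n = (i n).-1 &
    forall N, (N <= n)%N -> i N = cshift k (i' N)].
Proof.
move=> Hi hn.
have exP : exists N, (N < i N)%N by exists n.
case: (ex_minnP exP) => k hk hmin.
have hkn : (k <= n)%N by exact: hmin.
have fixed_below N : (N < k)%N -> i N = N.
  move=> hN; have := increasing_upto_gap Hi (leq0n N) (leq_trans (ltnW hN) hkn).
  by have [/hmin|] := ltnP N (i N); lia.
have moved_above N : (k <= N <= n)%N -> (k < i N)%N.
  by case/andP=> h1 h2; have := increasing_upto_gap Hi h1 h2; lia.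
exists k, (fun N => if (N < k)%N then N else (i N).-1); split.
- move=> a b /andP[hab hbn]; have := Hi a b; rewrite hab hbn.
  have := moved_above a; have := moved_above b; rewrite hbn.
  by case: ifP; case: ifP; lia.
- by rewrite ltnNge hkn.
- move=> N hN; rewrite /cshift.
  have [hNk | hNk] := ltnP N k; first by rewrite hNk fixed_below.
  by have := moved_above N; rewrite hNk hN; case: ifP; lia.
Qed.

Lemma bounded_indices {B : Type} (s : seq (nat * B)) k :
  exists n, (k <= n)%N /\ all (fun p => p.1 <= n)%N s.
Proof.
elim: s => [|a s [n [hk hs]]]; first by exists k.
exists (maxn a.1 n); split; first lia.
by rewrite /= leq_maxl; apply: sub_all hs => p /=; lia.
Qed.

Section Moments.
Context {C : numClosedFieldType}.

Lemma is_hom_prod {A B : algType C} {f : A -> B} {I : Type} (s : seq I) (F : I -> A) :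
  is_hom f -> f (\prod_(p <- s) F p) = \prod_(p <- s) f (F p).
Proof.
by case=> _ [f1 fM]; elim: s => [|a s IH]; rewrite ?big_nil ?big_cons ?fM ?IH.
Qed.

Lemma is_hom_on_hom {A B : algType C} (S : A -> Prop) {f : A -> B} :
  is_hom f -> is_hom_on S f.
Proof. by case=> fL [f1 fM]; split; [|split] => // *; rewrite ?fL ?fM. Qed.

Context {B : Type} {A : algType C}.
Variable iota : nat -> B -> A.

Lemma subalg_gen_prod {n} {s : seq (nat * B)} : all (fun p => p.1 <= n)%N s ->
  subalg_gen iota n (\prod_(p <- s) iota p.1 p.2).
Proof.
elim: s => [|a s IH]; rewrite ?big_nil ?big_cons /=; first by move=> _; apply: gen_one.
by case/andP=> ha hs; apply: gen_mul (IH hs); apply: gen_base; exists a.1, a.2.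
Qed.

Lemma is_hom_on_prod {n} {A' : algType C} {f : A -> A'} {s : seq (nat * B)} :
  is_hom_on (subalg_gen iota n) f -> all (fun p => p.1 <= n)%N s ->
  f (\prod_(p <- s) iota p.1 p.2) = \prod_(p <- s) f (iota p.1 p.2).
Proof.
case=> _ [f1 fM]; elim: s => [|a s IH]; rewrite ?big_nil ?big_cons //=.
case/andP=> ha hs; rewrite fM ?IH //; last exact: subalg_gen_prod.
by apply: gen_base; exists a.1, a.2.
Qed.

Definition linear_on (S : A -> Prop) (f : A -> C) : Prop :=
  forall a x y, S x -> S y -> f (a *: x + y) = a * f x + f y.

(* Induction on the generation of [x] needs the stronger invariant that [f]
   and [g] agree on [m * x * y] for every monomial [m], for all [y] on which
   this already holds. *)
Lemma subalg_gen_linear_ext n (f g : A -> C) :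
  linear_on (subalg_gen iota n) f -> linear_on (subalg_gen iota n) g ->
  (forall s : seq (nat * B), all (fun p => p.1 <= n)%N s ->
     f (\prod_(p <- s) iota p.1 p.2) = g (\prod_(p <- s) iota p.1 p.2)) ->
  forall x, subalg_gen iota n x -> f x = g x.
Proof.
move=> fL gL fg.
pose agree y := forall s : seq (nat * B), all (fun p => p.1 <= n)%N s ->
  f (\prod_(p <- s) iota p.1 p.2 * y) = g (\prod_(p <- s) iota p.1 p.2 * y).
have agree_mul x : subalg_gen iota n x ->
    forall y, subalg_gen iota n y -> agree y -> agree (x * y).
  elim=> {x} [x [N [b [hN ->]]] | | a x1 x2 h1 IH1 h2 IH2 | x1 x2 h1 IH1 h2 IH2] y hy ay.
  - move=> s hs; have := ay (rcons s (N, b)).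
    by rewrite -cats1 big_cat big_seq1 mulrA all_cat hs /= hN; apply.
  - by move=> s hs; rewrite mul1r; apply: ay.
  - move=> s hs; have ms := subalg_gen_prod hs.
    rewrite mulrDl -scalerAl mulrDr -scalerAr.
    have m1 : subalg_gen iota n (\prod_(p <- s) iota p.1 p.2 * (x1 * y)).
      by apply: gen_mul (gen_mul _ _).
    have m2 : subalg_gen iota n (\prod_(p <- s) iota p.1 p.2 * (x2 * y)).
      by apply: gen_mul (gen_mul _ _).
    by rewrite fL // gL // IH1 // IH2.
  - by rewrite -mulrA; apply: IH1 (gen_mul h2 hy) (IH2 _ hy ay).
have agree1 : agree 1 by move=> s hs; rewrite mulr1; apply: fg.
move=> x hx; have := agree_mul x hx 1 (gen_one _) agree1 [::] isT.
by rewrite big_nil !mul1r !mulr1.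
Qed.

Definition cshift_invariant (phi : A -> C) : Prop :=
  forall k (s : seq (nat * B)),
    phi (\prod_(p <- s) iota p.1 p.2) = phi (\prod_(p <- s) iota (cshift k p.1) p.2).

Lemma cshift_invariant_increasing_upto {phi} : cshift_invariant phi ->
  forall m n i, increasing_upto n i -> (i n <= n + m)%N ->
  forall s : seq (nat * B), all (fun p => p.1 <= n)%N s ->
    phi (\prod_(p <- s) iota p.1 p.2) = phi (\prod_(p <- s) iota (i p.1) p.2).
Proof.
move=> Hphi; elim=> [|m IH] n i Hi hm s hs.
  congr (phi _); apply: (eq_big_all hs) => p hp.
  by rewrite (increasing_upto_id Hi) //; lia.
have [hn | hn] := leqP (i n) n; first by apply: IH Hi _ s hs; lia.
have [k [i' [Hi' hi'n Hfac]]] := increasing_upto_cshift_factor Hi hn.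
have -> : \prod_(p <- s) iota (i p.1) p.2 =
          \prod_(p <- [seq (i' p.1, p.2) | p <- s]) iota (cshift k p.1) p.2.
  by rewrite big_map; apply: (eq_big_all hs) => p hp; rewrite Hfac.
by rewrite -Hphi big_map; apply: IH Hi' _ s hs; lia.
Qed.

Lemma spreadable_cshift_invariant phi : cshift_invariant phi -> spreadable phi iota.
Proof.
move=> Hphi i Hi s; have [n [_ hs]] := bounded_indices s 0.
apply: (cshift_invariant_increasing_upto Hphi (i n) n i _ _ s hs); last lia.
by move=> a b /andP[hab _]; apply: Hi.
Qed.

End Moments.

Section Cosimplicial.
Context {C : numClosedFieldType} {A : nat -> algType C}.
Variable d : forall n, nat -> A n -> A n.+1.
Hypothesis d_cosimplicial : forall n i j (x : A n), (i < j)%N -> (j <= n.+2)%N ->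
  d n.+1 j (d n i x) = d n.+1 i (d n j.-1 x).

Fixpoint iter_d0 (m : nat) : A 0 -> A m :=
  match m return A 0 -> A m with
  | 0 => id
  | m'.+1 => fun x => d m' 0 (iter_d0 m' x)
  end.

(* [copy m N] is the [N]-th copy of [A 0] inside [A m] (for [N <= m]): it is
   [iter_d0 N] followed by the top cofaces [d _ _.+1] of the filtration. *)
Fixpoint copy (m N : nat) : A 0 -> A m :=
  match m return A 0 -> A m with
  | 0 => id
  | m'.+1 => fun x =>
      if (m'.+1 <= N)%N then d m' 0 (iter_d0 m' x) else d m' m'.+1 (copy m' N x)
  end.

Lemma d_iter_d0 m j x : (j <= m)%N -> d m j (iter_d0 m x) = d m 0 (iter_d0 m x).
Proof.
elim: m j x => [|m IH] [|j] x hj //.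
rewrite [iter_d0 m.+1 x]/= d_cosimplicial //=; last lia.
by rewrite IH.
Qed.

Lemma copy_diag m x : copy m m x = iter_d0 m x.
Proof. by case: m => //= m; rewrite leqnn. Qed.

Lemma copy_top m N x : (N <= m)%N -> copy m.+1 N x = d m m.+1 (copy m N x).
Proof. by move=> hN; rewrite /= leqNgt ltnS hN. Qed.

Lemma d_copy m N k x : (N <= m)%N -> (k <= m.+1)%N ->
  d m k (copy m N x) = copy m.+1 (cshift k N) x.
Proof.
elim: m N k x => [|m IH] N k x hN hk.
  by move: hN; rewrite leqn0 => /eqP->; case: k hk => [|[|k]].
have [hmN | hNm] := ltnP m N.
  have -> : N = m.+1 by lia.
  have [hkm | hkm] := ltnP m.+1 k.
    have -> : k = m.+2 by lia.
    by rewrite /cshift ltnSn (copy_top m.+1).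
  have -> : cshift k m.+1 = m.+2 by rewrite /cshift ltnNge hkm.
  by rewrite !copy_diag d_iter_d0.
have hkN : (cshift k N <= m.+1)%N by rewrite /cshift; case: ifP; lia.
rewrite copy_top //; have [hkm | hkm] := ltnP m.+1 k.
  have -> : k = m.+2 by lia.
  have -> : cshift m.+2 N = N by rewrite /cshift; case: ifP; lia.
  by rewrite copy_top ?copy_top //; lia.
by rewrite -(d_cosimplicial m k m.+2) ?IH ?(copy_top m.+1) //; lia.
Qed.

Context {L : algType C} {mu : forall n, A n -> L}.
Hypothesis mu_top : forall n x, mu n.+1 (d n n.+1 x) = mu n x.

Lemma mu_copy m N x : (N <= m)%N -> mu m (copy m N x) = mu N (iter_d0 N x).
Proof.
elim: m => [|m IH] hN; first by move: hN; rewrite leqn0 => /eqP->.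
have [hmN | hNm] := ltnP m N; last by rewrite copy_top // mu_top IH.
have -> : N = m.+1 by lia.
by rewrite copy_diag.
Qed.

End Cosimplicial.

Lemma spreadable_SCO_limit (C : numClosedFieldType) (A : nat -> algType C)
    (phi : forall n, A n -> C) (d : forall n, nat -> A n -> A n.+1) :
  is_SCO phi d ->
  forall (L : algType C) (mu : forall n, A n -> L) (phiL : L -> C),
    is_ind_limit (fun n => d n n.+1) mu -> (forall n x, phiL (mu n x) = phi n x) ->
    forall alpha0 : L -> L, (forall n x, alpha0 (mu n x) = mu n.+1 (d n 0%N x)) ->
    spreadable phiL (fun N x => iter N alpha0 (mu 0%N x)).
Proof.
move=> [_ [d_morph d_cos]] L mu phiL [mu_hom [mu_top _]] phiL_mu alpha0 alpha0_mu.
have iota_copy m N x : (N <= m)%N -> iter N alpha0 (mu 0%N x) = mu m (copy d m N x).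
  move=> hN; rewrite (mu_copy _ mu_top) //.
  by elim: N {hN} x => [|N IH] x //=; rewrite IH alpha0_mu.
apply: spreadable_cshift_invariant => k s.
have [n [hk hs]] := bounded_indices s k.
have [d_hom d_phi] := d_morph n k (leqW hk).
have hs' : all (fun p => cshift k p.1 <= n.+1)%N s.
  by apply: sub_all hs => p /=; rewrite /cshift; case: ifP; lia.
rewrite (eq_big_all (F2 := fun p => mu n (copy d n p.1 p.2)) hs); last first.
  by move=> p hp; rewrite (iota_copy n).
rewrite (eq_big_all (F1 := fun p => iter (cshift k p.1) alpha0 (mu 0%N p.2))
  (F2 := fun p => mu n.+1 (copy d n.+1 (cshift k p.1) p.2)) hs'); last first.
  by move=> p hp; rewrite (iota_copy n.+1).
rewrite -!is_hom_prod // !phiL_mu -d_phi is_hom_prod //.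
by congr (phi _ _); apply: (eq_big_all hs) => p hp; rewrite d_copy // leqW.
Qed.

Section FreeProduct.
Variables (C : numClosedFieldType) (B A : algType C) (phi : A -> C).
Variable iota : nat -> B -> A.
Hypothesis phi_state : is_state phi.
Variables (Af : algType C) (lam : nat -> B -> Af).
Hypothesis lam_free : is_free_product lam.
Variable pi : Af -> A.
Hypothesis pi_hom : is_hom pi.
Hypothesis pi_lam : forall N b, pi (lam N b) = iota N b.

Lemma moment_free s :
  phi (pi (\prod_(p <- s) lam p.1 p.2)) = phi (\prod_(p <- s) iota p.1 p.2).
Proof. by rewrite is_hom_prod //; under eq_bigr do rewrite pi_lam. Qed.

Lemma condB_spreadable : spreadable phi iota -> condB lam (fun x => phi (pi x)).
Proof.
move=> Hsp n k _ delta delta_hom delta_lam.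
have [phiL _] := phi_state; have [piL _] := pi_hom.
apply: subalg_gen_linear_ext => [a x y hx hy | a x y hx hy | s hs].
- by case: delta_hom => deltaL _; rewrite deltaL // piL phiL.
- by rewrite piL phiL.
- rewrite (is_hom_on_prod _ delta_hom hs) moment_free.
  rewrite (eq_big_all (F2 := fun p => lam (cshift k p.1) p.2) hs); last first.
    by move=> p hp; rewrite delta_lam.
  have := moment_free [seq (cshift k p.1, p.2) | p <- s]; rewrite !big_map => ->.
  by symmetry; apply: Hsp => m m'; apply: cshift_increasing.
Qed.

Lemma spreadable_condB : condB lam (fun x => phi (pi x)) -> spreadable phi iota.
Proof.
move=> HB; apply: spreadable_cshift_invariant => k s.
have [n [hk hs]] := bounded_indices s k.
have [lam_hom free] := lam_free.
have [h [[h_hom h_lam] _]] := free Af (fun N => lam (cshift k N)) (fun N => lam_hom _).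
have := HB n k (leqW hk) h (is_hom_on_hom _ h_hom) (fun N b _ => h_lam N b) _
  (subalg_gen_prod lam hs).
rewrite !moment_free is_hom_prod //; under eq_bigr do rewrite h_lam.
by have := moment_free [seq (cshift k p.1, p.2) | p <- s]; rewrite !big_map => -> ->.
Qed.

End FreeProduct.

Lemma spreadable_condC (C : numClosedFieldType) (B A : algType C) (phi : A -> C)
    (iota : nat -> B -> A) :
  condC phi iota -> spreadable phi iota.
Proof.
case=> d [d_props _]; apply: spreadable_cshift_invariant => k s.
have [n [hk hs]] := bounded_indices s k.
have [d_hom [_ [d_iota d_phi]]] := d_props n k (leqW hk).
rewrite -(d_phi _ (subalg_gen_prod iota hs)) (is_hom_on_prod _ d_hom hs).
by congr (phi _); apply: (eq_big_all hs) => p; apply: d_iota.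
Qed.

Theorem mainTheorem5 (C : numClosedFieldType) :
  (forall (A : nat -> algType C) (phi : forall n, A n -> C)
          (d : forall n, nat -> A n -> A n.+1),
     is_SCO phi d ->
     forall (L : algType C) (mu : forall n, A n -> L) (phiL : L -> C),
       is_ind_limit (fun n => d n n.+1) mu ->
       is_state phiL -> (forall n x, phiL (mu n x) = phi n x) ->
       forall alpha0 : L -> L,
         is_morph phiL phiL alpha0 ->
         (forall n x, alpha0 (mu n x) = mu n.+1 (d n 0%N x)) ->
         spreadable phiL (fun N x => iter N alpha0 (mu 0%N x)))
  /\
  (forall (B A : algType C) (phi : A -> C) (iota : nat -> B -> A),
     is_state phi -> (forall N, is_hom (iota N)) ->
     forall (Af : algType C) (lam : nat -> B -> Af),
       is_free_product lam ->
       forall pi : Af -> A, is_hom pi -> (forall N b, pi (lam N b) = iota N b) ->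
         (spreadable phi iota <-> condB lam (fun x => phi (pi x))) /\
         (condC phi iota -> spreadable phi iota)).
Proof.
split.
  move=> A phi d SCO L mu phiL lim _ phiL_mu alpha0 _ alpha0_mu.
  exact: spreadable_SCO_limit SCO L mu phiL lim phiL_mu alpha0 alpha0_mu.
move=> B A phi iota phi_state _ Af lam free pi pi_hom pi_lam.
split; last exact: spreadable_condC.
split; [exact: condB_spreadable | exact: spreadable_condB].
Qed.
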